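(* Prioritized planning is suboptimal for the flowtime objective in general for the class of P-solvable MAPF instances: there exists a P-solvable MAPF instance such that, for every priority ordering $\prec$, every solution consistent with $\prec$ has flowtime strictly greater than the minimum flowtime over all solutions of the instance.
   Context: A MAPF instance consists of a connected undirected graph $G=(V,E)$ and $M$ agents $a_1,\dots,a_M$; agent $a_i$ has a start vertex $s_i$ and a target vertex $t_i$, and start vertices are pairwise distinct, as are target vertices. Time is discrete; at each time step every agent either moves to an adjacent vertex or waits. A path for $a_i$ is a sequence $\pi_i=\langle \pi_i(0),\pi_i(1),\dots\rangle$ with $\pi_i(0)=s_i$, consecutive vertices equal or adjacent, and $\pi_i(t)=t_i$ for all $t\ge T_i$, where the arrival time $T_i$ is the least such time. Two agents collide if they occupy the same vertex at the same time, or traverse the same edge in opposite directions at the same time step. A solution is a collision-free set of paths, one per agent; its flowtime is $\sum_{i=1}^M T_i$. A priority ordering is a strict partial order $\prec$ on $\{1,\dots,M\}$ ($a_i$ has higher priority than $a_j$ iff $i\prec j$). A solution $\{\pi_i\}$ is consistent with $\prec$ if for every $i$ the arrival time of $\pi_i$ equals the minimum arrival time over all paths for $a_i$ that do not collide with any $\pi_k$ with $k\prec i$ (higher priority agents never wait for lower priority agents). A MAPF instance is P-solvable iff it has a solution consistent with some priority ordering. *)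

From mathcomp Require Import all_boot.
Set Implicit Arguments. Unset Strict Implicit. Unset Printing Implicit Defensive.

Section MAPF.
Variables (n M : nat) (e : rel 'I_n).

Definition mapf_instance (s tg : 'I_M -> 'I_n) : Prop :=
  symmetric e /\ irreflexive e /\ (forall x y, connect e x y) /\
  injective s /\ injective tg.

Definition stays_from (tg : 'I_n) (p : nat -> 'I_n) (T : nat) : Prop :=
  forall t, T <= t -> p t = tg.

Definition valid_path (s0 t0 : 'I_n) (p : nat -> 'I_n) : Prop :=
  p 0 = s0 /\ (forall t, p t = p t.+1 \/ e (p t) (p t.+1)) /\
  exists T, stays_from t0 p T.

Definition arrival (t0 : 'I_n) (p : nat -> 'I_n) (T : nat) : Prop :=
  stays_from t0 p T /\ forall T', stays_from t0 p T' -> T <= T'.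

Definition collide (p q : nat -> 'I_n) : Prop :=
  exists t, p t = q t \/ (p t = q t.+1 /\ p t.+1 = q t).

Definition is_solution (s tg : 'I_M -> 'I_n) (P : 'I_M -> nat -> 'I_n) : Prop :=
  (forall i, valid_path (s i) (tg i) (P i)) /\
  (forall i j, i != j -> ~ collide (P i) (P j)).

Definition has_flowtime (tg : 'I_M -> 'I_n) (P : 'I_M -> nat -> 'I_n) (F : nat) : Prop :=
  exists T : 'I_M -> nat, (forall i, arrival (tg i) (P i) (T i)) /\ F = \sum_(i < M) T i.

Definition min_flowtime (s tg : 'I_M -> 'I_n) (Fmin : nat) : Prop :=
  (exists P, is_solution s tg P /\ has_flowtime tg P Fmin) /\
  (forall P F, is_solution s tg P -> has_flowtime tg P F -> Fmin <= F).

(* priority ordering: prec i j means a_i has higher priority than a_j *)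
Definition strict_partial_order (prec : rel 'I_M) : Prop :=
  irreflexive prec /\ transitive prec.

Definition consistent (s tg : 'I_M -> 'I_n) (prec : rel 'I_M)
    (P : 'I_M -> nat -> 'I_n) : Prop :=
  is_solution s tg P /\
  forall i, exists Ti, arrival (tg i) (P i) Ti /\
    forall (q : nat -> 'I_n) (Tq : nat),
      valid_path (s i) (tg i) q ->
      (forall k, prec k i -> ~ collide q (P k)) ->
      arrival (tg i) q Tq -> Ti <= Tq.

Definition P_solvable (s tg : 'I_M -> 'I_n) : Prop :=
  exists prec, strict_partial_order prec /\ exists P, consistent s tg prec P.

End MAPF.

From mathcomp Require Import all_boot.
Set Implicit Arguments. Unset Strict Implicit. Unset Printing Implicit Defensive.

(* Agent a0 travels from 6 to 3 and agent a1 from 1 to 4 on a 7-vertex graph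
   in which a0's only route of length 3, 6-4-1-3, passes through both the
   start and the target of a1, while a1 alone needs a single step.
   Exhaustive search over joint moves shows that arrival times summing to at
   most 6 must be (4, 2): a0 detours via 0 and 2 while a1 waits one step.
   In a prioritized solution the agent without superior moves as if alone,
   arriving at time 3 (a0) or 1 (a1), so the flowtime exceeds 6.  The
   ordering a0 before a1 does admit a consistent solution, in which a1
   evades via 3, 2 and 0. *)

Section Reach.
Variables (S : eqType) (moves : S -> seq S) (allowed : nat -> rel S) (init : S).

Fixpoint reach k : seq S :=
  if k is k'.+1 then
    undup (flatten [seq [seq y <- moves x | allowed k' x y] | x <- reach k'])
  else [:: init].

Lemma reach_trajectory (f : nat -> S) :
  f 0 = init -> (forall t, f t.+1 \in moves (f t)) ->
  (forall t, allowed t (f t) (f t.+1)) -> forall t, f t \in reach t.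
Proof.
move=> f0 f_moves f_allowed; elim=> [|t IHt] /=; first by rewrite f0 mem_seq1.
rewrite mem_undup; apply/flattenP.
exists [seq y <- moves (f t) | allowed t (f t) y]; first exact: map_f.
by rewrite mem_filter f_allowed f_moves.
Qed.

Lemma reach_nil_no_trajectory K (f : nat -> S) :
  reach K = [::] -> f 0 = init -> (forall t, f t.+1 \in moves (f t)) ->
  ~ (forall t, allowed t (f t) (f t.+1)).
Proof. by move=> reachK f0 f_moves /(reach_trajectory f0 f_moves)/(_ K); rewrite reachK. Qed.

End Reach.

Section Paths.
Variables (n : nat) (e : rel 'I_n).
Implicit Types (p q : nat -> 'I_n) (s g h x y : 'I_n).

Definition clash (p q : nat -> 'I_n) t :=
  (p t == q t) || ((p t == q t.+1) && (p t.+1 == q t)).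

Lemma collide_iff_clash p q : collide p q <-> exists t, clash p q t.
Proof.
split=> -[t clash_t]; exists t; rewrite /clash in clash_t *.
  by case: clash_t => [-> | [-> ->]]; rewrite !eqxx ?orbT.
by case/orP: clash_t => [/eqP pq | /andP [/eqP pq /eqP qp]]; [left | right].
Qed.

Lemma collide_sym p q : collide p q -> collide q p.
Proof. by case=> t [pq | [pq qp]]; exists t; [left | right]. Qed.

Lemma stays_from_le g p T T' : stays_from g p T -> T <= T' -> stays_from g p T'.
Proof. by move=> stayT le_TT' t le_T't; apply: stayT; apply: leq_trans le_T't. Qed.

Lemma arrival_unique g p T T' : arrival g p T -> arrival g p T' -> T = T'.
Proof. by move=> [stayT minT] [stayT' minT']; apply/eqP; rewrite eqn_leq minT // minT'. Qed.

Lemma arrival_last_move g p T : stays_from g p T.+1 -> p T != g -> arrival g p T.+1.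
Proof.
move=> stay pT; split=> // T' stayT'; rewrite ltnNge; apply: contra pT => le_T'T.
by apply/eqP/stayT'.
Qed.

Lemma clash_free_no_collide p q g h K :
  stays_from g p K -> stays_from h q K -> g != h ->
  all (fun t => ~~ clash p q t) (iota 0 K) -> ~ collide p q.
Proof.
move=> stay_p stay_q gh /allP clash_free /collide_iff_clash [t clash_t].
have [lt_tK | le_Kt] := ltnP t K.
  by move: (clash_free t); rewrite mem_iota lt_tK clash_t => /(_ isT).
move: clash_t; rewrite /clash !stay_p ?stay_q ?(leqW le_Kt) //.
by rewrite (negbTE gh) andbF.
Qed.

Definition move x y := (x == y) || e x y.

Definition walk (s : 'I_n) (l : seq 'I_n) (g : 'I_n) : nat -> 'I_n := nth g (s :: l).

Lemma walk_stays s l g : stays_from g (walk s l g) (size l).+1.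
Proof. by move=> t gt_t; rewrite /walk nth_default. Qed.

Lemma walk_arrival s l g : last s l != g -> arrival g (walk s l g) (size l).+1.
Proof.
by move=> last_g; apply: arrival_last_move; [apply: walk_stays | rewrite /walk -last_nth].
Qed.

Lemma valid_walk s l g : path move s (rcons l g) -> valid_path e s g (walk s l g).
Proof.
move=> /(pathP g) steps; split=> //; split; last by exists (size l).+1; apply: walk_stays.
move=> t; have [lt_t | le_t] := ltnP t (size l).+1.
  move: (steps t); rewrite size_rcons -rcons_cons !nth_rcons_default => /(_ lt_t).
  by case/orP => [/eqP | ]; [left | right].
by left; rewrite !walk_stays // ltnW.
Qed.

Section Search.
Variable vertices : seq 'I_n.
Hypothesis mem_vertices : forall x, x \in vertices.

Definition moves x := [seq y <- vertices | move x y].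

Lemma valid_path_moves s g p : valid_path e s g p -> forall t, p t.+1 \in moves (p t).
Proof.
move=> [_ [steps _]] t; rewrite mem_filter mem_vertices andbT /move.
by case: (steps t) => [-> | ->]; rewrite ?eqxx ?orbT.
Qed.

(* [y] is the position at time [t.+1], reached by the move made at step [t]. *)
Definition settled g T t y := (T <= t.+1) ==> (y == g).

Lemma stays_settled g p T t : stays_from g p T -> settled g T t (p t.+1).
Proof. by move=> stay; apply/implyP => le_T; rewrite stay. Qed.

Definition compatible (x y x' y' : 'I_n) := (y != y') && ~~ ((y == x') && (x == y')).

Lemma no_collide_compatible p q t :
  ~ collide p q -> compatible (p t) (p t.+1) (q t) (q t.+1).
Proof.
move=> no_coll; apply/andP; split; apply/negP.
  by move/eqP=> pq; apply: no_coll; exists t.+1; left.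
by move=> /andP [/eqP pq /eqP qp]; apply: no_coll; exists t; right.
Qed.

Lemma arrival_lower_bound (allowed : nat -> rel 'I_n) s g Tmin K q T :
  all (fun T => reach moves (fun t x y => allowed t x y && settled g T t y) s K == [::])
      (iota 0 Tmin) ->
  valid_path e s g q -> (forall t, allowed t (q t) (q t.+1)) ->
  stays_from g q T -> Tmin <= T.
Proof.
move=> /allP no_reach q_valid q_allowed stay; rewrite leqNgt; apply/negP => lt_T.
have /eqP reachK : reach moves (fun t x y => allowed t x y && settled g T t y) s K == [::].
  by apply: no_reach; rewrite mem_iota.
apply: (reach_nil_no_trajectory reachK q_valid.1 (valid_path_moves q_valid)) => t.
by rewrite q_allowed stays_settled.
Qed.

Definition pair_moves (xx : 'I_n * 'I_n) := [seq (y, y') | y <- moves xx.1, y' <- moves xx.2].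

Definition pair_allowed g g' T T' t (xx yy : 'I_n * 'I_n) :=
  [&& compatible xx.1 yy.1 xx.2 yy.2, settled g T t yy.1 & settled g' T' t yy.2].

Lemma pair_infeasible s s' g g' T T' K p p' :
  reach pair_moves (pair_allowed g g' T T') (s, s') K = [::] ->
  valid_path e s g p -> valid_path e s' g' p' -> ~ collide p p' ->
  stays_from g p T -> stays_from g' p' T' -> False.
Proof.
move=> reachK p_valid p'_valid no_coll stay stay'.
apply: (reach_nil_no_trajectory (f := fun t => (p t, p' t)) reachK).
- by rewrite p_valid.1 p'_valid.1.
- by move=> t; apply: allpairs_f; apply: valid_path_moves; [exact: p_valid | exact: p'_valid].
- by move=> t; rewrite /pair_allowed /= (no_collide_compatible _ no_coll) !stays_settled.
Qed.

End Search.

Section Priorities.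
Variables (M : nat) (s tg : 'I_M -> 'I_n).

Lemma unhindered_arrival prec P i T q Tq :
  consistent e s tg prec P -> (forall k, ~~ prec k i) ->
  arrival (tg i) (P i) T -> valid_path e (s i) (tg i) q -> arrival (tg i) q Tq ->
  T <= Tq.
Proof.
move=> [_ /(_ i) [Ti [arr_i min_i]]] top arr q_valid q_arr.
rewrite (arrival_unique arr arr_i); apply: min_i q_valid _ q_arr => k prec_ki.
by move: (top k); rewrite prec_ki.
Qed.

End Priorities.

End Paths.

Definition a0 : 'I_2 := @Ordinal 2 0 isT.
Definition a1 : 'I_2 := @Ordinal 2 1 isT.

Definition agent2 (T : Type) (x y : T) (i : 'I_2) : T := if i == a0 then x else y.

Lemma ord2P (i : 'I_2) : i = a0 \/ i = a1.
Proof. by case: i => [[|[|k]] lt_i2]; [left | right | ]; try apply: val_inj. Qed.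

Lemma sum_ord2 (T : 'I_2 -> nat) : \sum_(i < 2) T i = T a0 + T a1.
Proof. by rewrite big_ord_recr big_ord1; congr (T _ + T _); apply: val_inj. Qed.

Lemma strict_order2_top (prec : rel 'I_2) :
  strict_partial_order prec -> (forall k, ~~ prec k a0) \/ (forall k, ~~ prec k a1).
Proof.
move=> [irr trans]; case prec10: (prec a1 a0); [right | left] => k;
  case: (ord2P k) => ->; rewrite ?irr ?prec10 //.
by apply/negP => prec01; move: (trans _ _ _ prec01 prec10); rewrite irr.
Qed.

Lemma solution2 n (e : rel 'I_n) (s tg : 'I_2 -> 'I_n) (p q : nat -> 'I_n) :
  valid_path e (s a0) (tg a0) p -> valid_path e (s a1) (tg a1) q -> ~ collide p q ->
  is_solution e s tg (agent2 p q).
Proof.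
move=> p_valid q_valid no_coll; split=> [i | i j]; first by case: (ord2P i) => ->.
by case: (ord2P i) => ->; case: (ord2P j) => -> // _ /collide_sym.
Qed.

Notation vtx k := (@Ordinal 7 k isT).

Definition vertices : seq 'I_7 := [:: vtx 0; vtx 1; vtx 2; vtx 3; vtx 4; vtx 5; vtx 6].

Lemma mem_vertices (x : 'I_7) : x \in vertices.
Proof. by case: x => [[|[|[|[|[|[|[|k]]]]]]]]. Qed.

Lemma all_vertices (P : pred 'I_7) : all P vertices -> forall x, P x.
Proof. by move=> /allP P_all x; apply: P_all; apply: mem_vertices. Qed.

Definition edges : seq (nat * nat) :=
  [:: (0, 2); (0, 4); (0, 5); (1, 3); (1, 4); (2, 3); (3, 5); (4, 6)].

Definition E : rel 'I_7 :=
  fun x y => ((val x, val y) \in edges) || ((val y, val x) \in edges).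

Lemma E_sym : symmetric E.
Proof. by move=> x y; rewrite /E orbC. Qed.

Definition start := agent2 (vtx 6) (vtx 1).
Definition target := agent2 (vtx 3) (vtx 4).

Definition route (x : 'I_7) : seq 'I_7 :=
  match val x with
  | 2 | 5 => [:: vtx 0; vtx 4]
  | 3 => [:: vtx 1; vtx 4]
  | 4 => [::]
  | _ => [:: vtx 4]
  end.

Lemma E_connected x y : connect E x y.
Proof.
have to4 z : connect E z (vtx 4).
  apply/connectP; exists (route z).
    by apply: (@all_vertices (fun z => path E z (route z))); vm_compute.
  by apply/eqP; apply: (@all_vertices (fun z => vtx 4 == last z (route z))); vm_compute.
apply: connect_trans (to4 x) _.
by rewrite (sym_connect_sym E_sym) to4.
Qed.

Lemma instance_wf : mapf_instance E start target.
Proof.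
split; first exact: E_sym.
split; first by move=> x; apply/negbTE; apply: (@all_vertices (fun x => ~~ E x x)); vm_compute.
split; first exact: E_connected.
by split=> i j; case: (ord2P i) => ->; case: (ord2P j) => -> // /(congr1 val).
Qed.

Definition short0 := walk (vtx 6) [:: vtx 4; vtx 1] (vtx 3).
Definition evade1 := walk (vtx 1) [:: vtx 3; vtx 2; vtx 0] (vtx 4).
Definition detour0 := walk (vtx 6) [:: vtx 4; vtx 0; vtx 2] (vtx 3).
Definition wait1 := walk (vtx 1) [:: vtx 1] (vtx 4).
Definition direct1 := walk (vtx 1) [::] (vtx 4).

Lemma short0_valid : valid_path E (vtx 6) (vtx 3) short0.
Proof. by apply: valid_walk; vm_compute. Qed.

Lemma direct1_valid : valid_path E (vtx 1) (vtx 4) direct1.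
Proof. by apply: valid_walk; vm_compute. Qed.

Lemma prioritized_solution : is_solution E start target (agent2 short0 evade1).
Proof.
apply: solution2; first exact: short0_valid.
  by apply: valid_walk; vm_compute.
apply: (clash_free_no_collide (g := vtx 3) (h := vtx 4) (K := 4)) => //.
- by apply: stays_from_le; first exact: walk_stays.
- exact: walk_stays.
Qed.

Lemma short0_is_shortest q T :
  valid_path E (vtx 6) (vtx 3) q -> stays_from (vtx 3) q T -> 3 <= T.
Proof.
move=> q_valid.
pose unconstrained (t : nat) (x y : 'I_7) := true.
apply: (arrival_lower_bound (allowed := unconstrained) (K := 2) mem_vertices _ q_valid) => [|//].
by vm_compute.
Qed.

Lemma evade1_is_fastest q T :
  valid_path E (vtx 1) (vtx 4) q -> ~ collide q short0 -> stays_from (vtx 4) q T -> 4 <= T.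
Proof.
move=> q_valid avoid.
pose avoid_short0 t x y := compatible x y (short0 t) (short0 t.+1).
apply: (arrival_lower_bound (allowed := avoid_short0) (K := 3) mem_vertices _ q_valid) => [|t].
  by vm_compute.
exact: no_collide_compatible.
Qed.

Lemma P_solvable_instance : P_solvable E start target.
Proof.
exists (fun i j => (i == a0) && (j == a1)); split.
  split=> [i | j i k /andP [_ /eqP ->] /andP [/eqP /(congr1 val) //]].
  by case: (ord2P i) => ->.
exists (agent2 short0 evade1); split; first exact: prioritized_solution.
move=> i; case: (ord2P i) => ->.
- exists 3; split; first exact: walk_arrival.
  by move=> q Tq q_valid _ [stay _]; apply: short0_is_shortest q_valid stay.
- exists 4; split; first exact: walk_arrival.
  by move=> q Tq q_valid avoid [stay _]; apply: evade1_is_fastest q_valid (avoid a0 isT) stay.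
Qed.

Lemma joint_search :
  all (fun T0 => all (fun T1 =>
    (T0 + T1 <= 6) && ((T0, T1) != (4, 2)) ==>
      (reach (pair_moves E vertices) (pair_allowed (vtx 3) (vtx 4) T0 T1) (vtx 6, vtx 1) 6
       == [::])) (iota 0 7)) (iota 0 7).
Proof. by vm_compute. Qed.

Lemma joint_arrivals P T0 T1 :
  is_solution E start target P ->
  stays_from (vtx 3) (P a0) T0 -> stays_from (vtx 4) (P a1) T1 ->
  T0 + T1 <= 6 -> T0 = 4 /\ T1 = 2.
Proof.
move=> [valid no_coll] stay0 stay1 le6.
have [[-> ->] // | ne] := eqVneq (T0, T1) (4, 2).
have in_range m : m <= 6 -> m \in iota 0 7 by rewrite mem_iota.
move: (allP joint_search T0 (in_range _ (leq_trans (leq_addr _ _) le6))).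
move=> /allP /(_ T1 (in_range _ (leq_trans (leq_addl _ _) le6))).
rewrite le6 ne => /eqP reach_nil; exfalso.
exact: (pair_infeasible mem_vertices reach_nil (valid a0) (valid a1) (no_coll a0 a1 isT)).
Qed.

Lemma optimal_solution : is_solution E start target (agent2 detour0 wait1).
Proof.
apply: solution2.
- by apply: valid_walk; vm_compute.
- by apply: valid_walk; vm_compute.
apply: (clash_free_no_collide (g := vtx 3) (h := vtx 4) (K := 4)) => //.
- exact: walk_stays.
- by apply: stays_from_le; first exact: walk_stays.
Qed.

Lemma min_flowtime6 : min_flowtime E start target 6.
Proof.
split.
  exists (agent2 detour0 wait1); split; first exact: optimal_solution.
  exists (agent2 4 2); split; last by rewrite sum_ord2.
  by move=> i; case: (ord2P i) => ->; apply: walk_arrival.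
move=> P F sol [T [arr ->]]; rewrite sum_ord2 leqNgt; apply/negP => lt6.
have [T0 T1] := joint_arrivals sol (arr a0).1 (arr a1).1 (ltnW lt6).
by move: lt6; rewrite T0 T1.
Qed.

Lemma prioritized_unhindered_agent prec P T :
  strict_partial_order prec -> consistent E start target prec P ->
  (forall i, arrival (target i) (P i) (T i)) -> T a0 <= 3 \/ T a1 <= 1.
Proof.
move=> spo cP arr; case: (strict_order2_top spo) => top; [left | right].
- exact: unhindered_arrival cP top (arr a0) short0_valid (walk_arrival _).
- exact: unhindered_arrival cP top (arr a1) direct1_valid (walk_arrival _).
Qed.

Theorem theorem4 :
  exists (n M : nat) (e : rel 'I_n) (s tg : 'I_M -> 'I_n),
    mapf_instance e s tg /\ P_solvable e s tg /\
    exists Fmin, min_flowtime e s tg Fmin /\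
      forall prec : rel 'I_M, strict_partial_order prec ->
      forall P, consistent e s tg prec P ->
      forall F, has_flowtime tg P F -> Fmin < F.
Proof.
exists 7, 2, E, start, target; split; first exact: instance_wf.
split; first exact: P_solvable_instance.
exists 6; split; first exact: min_flowtime6.
move=> prec spo P cP F [T [arr ->]]; rewrite sum_ord2 ltnNge; apply/negP => le6.
have [T0 T1] := joint_arrivals cP.1 (arr a0).1 (arr a1).1 le6.
by case: (prioritized_unhindered_agent spo cP arr); rewrite ?T0 ?T1.
Qed.
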